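(* Let $x_j$ be a real random variable and $\boldsymbol{x}_C$ a random vector independent of $x_j$. If $f(x_j,\boldsymbol{x}_C)=g_1(x_j)h_1(\boldsymbol{x}_C)+\cdots+g_k(x_j)h_k(\boldsymbol{x}_C)$, where $g_1,\dots,g_k$ are functions of $x_j$ only and $h_1,\dots,h_k$ are functions of $\boldsymbol{x}_C$ only, then $$\mathbb{E}_{\boldsymbol{x}_C}\big[I_{ice}(x_j;\boldsymbol{x}_C)\big]\ge I_{pdp}(x_j).$$
   Context: Inputs are $\boldsymbol{x}=(x_1,\dots,x_m)$ with independent components; $C=\{1,\dots,m\}\setminus\{j\}$ and $\boldsymbol{x}_C$ denotes the vector of the inputs with indices in $C$. $\mathbb{E}_{z}$ and $\mathbb{V}_{z}$ denote expectation and variance taken with respect to the random variable $z$ only, the other arguments being held fixed. For a fixed value of $\boldsymbol{x}_C$, the ICE importance is $I_{ice}(x_j;\boldsymbol{x}_C)=\sqrt{\mathbb{V}_{x_j}[f(x_j,\boldsymbol{x}_C)]}$. The PDP importance is $I_{pdp}(x_j)=\sqrt{\mathbb{V}_{x_j}\big[\mathbb{E}_{\boldsymbol{x}_C}[f(x_j,\boldsymbol{x}_C)]\big]}$. All expectations, variances and covariances involved are assumed to exist and be finite. *)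

From HB Require Import structures.
From mathcomp Require Import all_boot all_order all_algebra.
From mathcomp Require Import all_classical all_reals all_analysis.
Set Implicit Arguments. Unset Strict Implicit. Unset Printing Implicit Defensive.
Import Order.TTheory GRing.Theory Num.Theory.
Local Open Scope ring_scope.
Local Open Scope classical_set_scope.

Section Defs.
Context (R : realType).

Definition Expect d (T : measurableType d) (P : probability T R) (u : T -> R) : R :=
  Rintegral P setT u.

Definition Var d (T : measurableType d) (P : probability T R) (u : T -> R) : R :=
  Expect P (fun t => (u t - Expect P u) ^+ 2).

(* ICE importance: Pj = law of x_j, f : x_j -> x_C -> R *)
Definition I_ice d (T : measurableType d) (Pj : probability R R)
  (f : R -> T -> R) (xC : T) : R :=
  Num.sqrt (Var Pj (fun xj => f xj xC)).

(* PDP importance: PC = law of x_C *)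
Definition I_pdp d (T : measurableType d) (Pj : probability R R)
  (PC : probability T R) (f : R -> T -> R) : R :=
  Num.sqrt (Var Pj (fun xj => Expect PC (fun xC => f xj xC))).
End Defs.

From HB Require Import structures.
From mathcomp Require Import all_boot all_order all_algebra.
From mathcomp Require Import all_classical all_reals all_analysis.
From mathcomp Require Import measurable_realfun ring lra.
Set Implicit Arguments. Unset Strict Implicit. Unset Printing Implicit Defensive.
Import Order.TTheory GRing.Theory Num.Theory.
Local Open Scope ring_scope.
Local Open Scope classical_set_scope.

(* Write f(x_j, x_C) = sum_l u_l(x_j) v_l(x_C) and let Q be the covariance
   matrix of the u_l under the law of x_j.  The ICE variance at x_C is
   Q(v(x_C), v(x_C)) and the PDP variance is Q(b, b) with b = E[v(x_C)], so the
   claim is Jensen's inequality for the seminorm sqrt Q, which follows from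
     Q(b, b) = E[Q(v(x_C), b)] <= sqrt Q(b, b) * E[sqrt Q(v(x_C), v(x_C))]
   (Cauchy-Schwarz).  Nothing is assumed about the integrability of the g_i
   and h_i, so the decomposition used is built from sections of f instead:
   f has finite rank, hence for finitely many points p_m and q_l
     f(x_j, x_C) = sum_l (sum_m c_ml f(x_j, p_m)) f(q_l, x_C),
   and these sections are square integrable resp. integrable by hypothesis. *)

Section RowSpan.
Variables (F : fieldType) (X : Type) (k : nat) (a : X -> 'rV[F]_k).

Definition image_rows {n} (B : 'M[F]_(n, k)) := forall m, exists x, row m B = a x.

Lemma image_rows_col_mx n (B : 'M[F]_(n, k)) (x : X) :
  image_rows B -> image_rows (col_mx B (a x)).
Proof.
move=> rB m; case: (split_ordP m) => [i ->|i ->]; first by rewrite rowKu.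
by exists x; rewrite rowKd (ord1 i) row_id.
Qed.

Lemma image_row_span_finite : exists n (p : 'I_n -> X),
  forall x, (a x <= \matrix_(m < n) a (p m))%MS.
Proof.
pose has_rank r := `[< exists n (B : 'M[F]_(n, k)), image_rows B /\ \rank B = r >].
have rank0 : exists r, has_rank r.
  by exists 0%N; apply/asboolP; exists 0%N, 0; split => [[]|]; rewrite ?mxrank0.
have rank_le r : has_rank r -> (r <= k)%N.
  by move=> /asboolP[n [B [_ <-]]]; exact: rank_leq_col.
case: (ex_maxnP rank0 rank_le) => r /asboolP[n [B [rB rkB]]] maxr.
have [p Bp] := choice rB.
exists n, p => x; have -> : \matrix_(m < n) a (p m) = B.
  by apply/row_matrixP => m; rewrite rowK Bp.
apply/negPn/negP => nx.
have /maxr : has_rank (\rank (col_mx B (a x))).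
  apply/asboolP; exists (n + 1)%N, (col_mx B (a x)).
  by split => //; exact: image_rows_col_mx.
have sB : (B <= col_mx B (a x))%MS by rewrite -addsmxE addsmxSl.
rewrite -rkB leqNgt (ltn_leqif (mxrank_leqif_sup sB)) col_mx_sub submx_refl.
by rewrite (negbTE nx).
Qed.
End RowSpan.

Lemma separable_sections_expansion (F : fieldType) (X Y : Type) (k : nat)
    (g : 'I_k -> X -> F) (h : 'I_k -> Y -> F) (f : X -> Y -> F) :
  (forall x y, f x y = \sum_(i < k) g i x * h i y) ->
  exists n m (q : 'I_n -> X) (p : 'I_m -> Y) (c : 'M[F]_(m, n)),
    forall x y, f x y = \sum_(l < n) (\sum_(j < m) f x (p j) * c j l) * f (q l) y.
Proof.
move=> hf; pose G x := \row_i g i x; pose H y := \row_i h i y.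
have fE x y : f x y = (G x *m (H y)^T) 0 0.
  by rewrite hf mxE; apply: eq_bigr => i _; rewrite !mxE.
have [m [p Hp]] := @image_row_span_finite _ _ _ H; set B1 := \matrix_(j < m) H (p j).
pose S x := G x *m B1^T; pose c1 y := H y *m pinvmx B1.
have fS x y : f x y = (S x *m (c1 y)^T) 0 0.
  by rewrite fE -{1}(mulmxKpV (Hp y)) trmx_mul mulmxA.
have Sp x j : S x 0 j = f x (p j).
  by rewrite fE !mxE; apply: eq_bigr => i _; rewrite !mxE.
have [n [q Sq]] := @image_row_span_finite _ _ _ S; set B2 := \matrix_(l < n) S (q l).
exists n, m, q, p, (pinvmx B2) => x y.
rewrite fS -(mulmxKpV (Sq x)) -mulmxA mxE; apply: eq_bigr => l _.
rewrite mxE fS; congr (_ * _).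
  by apply: eq_bigr => j _; rewrite Sp.
by rewrite !mxE; apply: eq_bigr => j _; rewrite mxE.
Qed.

Lemma le_sqrt_mul_of_quadratic_ge0 (R : rcfType) (a b c : R) :
  0 <= a -> 0 <= c -> (forall t, 0 <= t ^+ 2 * a - 2 * t * b + c) ->
  b <= Num.sqrt a * Num.sqrt c.
Proof.
move=> a0 c0 quad_ge0.
have [b_le0|b_gt0] := lerP b 0.
  by rewrite (le_trans b_le0) // mulr_ge0 ?sqrtr_ge0.
have a_gt0 : 0 < a.
  rewrite lt_def a0 andbT; apply/eqP => a_eq0.
  have := quad_ge0 ((c + 1) / b); rewrite a_eq0 mulr0 add0r.
  have -> : 2 * ((c + 1) / b) * b = 2 * (c + 1) by field; rewrite gt_eqF.
  lra.
have /ler_wsqrtr : b ^+ 2 <= a * c.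
  have := quad_ge0 (b / a); rewrite -(ler_pM2r a_gt0) mul0r.
  suff -> : ((b / a) ^+ 2 * a - 2 * (b / a) * b + c) * a = a * c - b ^+ 2 by lra.
  by field; rewrite gt_eqF.
by rewrite sqrtrM // sqrtr_sqr; apply: le_trans (ler_norm b).
Qed.

Section QuadraticForm.
Variables (R : rcfType) (s : nat) (G : 'M[R]_s).

Definition qform (y z : 'rV[R]_s) : R := (y *m G *m z^T) 0 0.

Lemma qformE y z : qform y z = \sum_(l < s) y 0 l * (G *m z^T) l 0.
Proof. by rewrite /qform -mulmxA mxE. Qed.

Hypothesis G_sym : G^T = G.

Lemma qformC y z : qform y z = qform z y.
Proof.
rewrite /qform -[in LHS](trmxK (y *m G *m z^T)) [in LHS]mxE.
by rewrite !trmx_mul trmxK G_sym mulmxA.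
Qed.

Lemma qform_quadratic t y z :
  qform (t *: y - z) (t *: y - z) = t ^+ 2 * qform y y - 2 * t * qform y z + qform z z.
Proof.
have zy := qformC z y; rewrite /qform !mxE in zy.
rewrite /qform linearB linearZ /= !(mulmxBl, mulmxBr) -!scalemxAl -?scalemxAr.
by rewrite !mxE zy; ring.
Qed.

Hypothesis G_psd : forall y, 0 <= qform y y.

Lemma qform_cauchy_schwarz y z :
  qform y z <= Num.sqrt (qform y y) * Num.sqrt (qform z z).
Proof.
by apply: le_sqrt_mul_of_quadratic_ge0 => // t; rewrite -qform_quadratic.
Qed.
End QuadraticForm.

Section IntegrableEFin.
Context (R : realType) (d : measure_display) (T : measurableType d)
  (mu : {measure set T -> \bar R}).

Lemma integrable_of_dominated (u v : T -> R) : measurable_fun setT u ->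
  (forall x, `|u x| <= v x) -> mu.-integrable setT (EFin \o v) ->
  mu.-integrable setT (EFin \o u).
Proof.
move=> mf uv; apply: le_integrable => //; first exact/measurable_EFinP.
by move=> x _; rewrite lee_fin (le_trans (uv x)) ?ler_norm.
Qed.

Lemma integrableD_EFin (u v : T -> R) : mu.-integrable setT (EFin \o u) ->
  mu.-integrable setT (EFin \o v) -> mu.-integrable setT (EFin \o (u \+ v)).
Proof.
by move=> iu iv; apply: eq_integrable (integrableD measurableT iu iv).
Qed.

Lemma integrableZl_EFin (c : R) (u : T -> R) : mu.-integrable setT (EFin \o u) ->
  mu.-integrable setT (EFin \o (fun x => c * u x)).
Proof.
by move=> iu; apply: eq_integrable (integrableZl measurableT c iu).
Qed.

Lemma integrable_sum_EFin (I : Type) (s : seq I) (u : I -> T -> R) :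
  (forall i, mu.-integrable setT (EFin \o u i)) ->
  mu.-integrable setT (EFin \o (fun x => \sum_(i <- s) u i x)).
Proof.
move=> iu; apply: eq_integrable
  (integrable_sum measurableT s (P := xpredT) (fun i _ => iu i)) => // x _.
by rewrite /= sumEFin.
Qed.
End IntegrableEFin.

Section SquareIntegrable.
Context (R : realType) (d : measure_display) (T : measurableType d)
  (mu : {finite_measure set T -> \bar R}).

Definition square_integrable (u : T -> R) :=
  measurable_fun setT u /\ mu.-integrable setT (EFin \o (fun x => u x ^+ 2)).

Lemma square_integrable_cst (c : R) : square_integrable (cst c).
Proof.
split; first exact: measurable_cst.
exact: (finite_measure_integrable_cst mu (c ^+ 2) measurableT).
Qed.

Lemma square_integrable_mul (u v : T -> R) : square_integrable u ->
  square_integrable v -> mu.-integrable setT (EFin \o (u \* v)).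
Proof.
move=> [mf iu] [mg iv].
apply: (integrable_of_dominated _ _ (integrableD_EFin iu iv)) => [|x /=].
  exact: measurable_funM.
rewrite normrM -(real_normK (num_real (u x))) -(real_normK (num_real (v x))).
by have := sqr_ge0 (`|u x| - `|v x|); nra.
Qed.

Lemma square_integrable_integrable (u : T -> R) : square_integrable u ->
  mu.-integrable setT (EFin \o u).
Proof.
move=> su; apply: eq_integrable
  (square_integrable_mul su (square_integrable_cst 1)) => // x _.
by rewrite /= mulr1.
Qed.

Lemma square_integrableD (u v : T -> R) : square_integrable u ->
  square_integrable v -> square_integrable (u \+ v).
Proof.
move=> [mf iu] [mg iv]; split; first exact: measurable_funD.
apply: (integrable_of_dominated _ _
  (integrableD_EFin (integrableZl_EFin 2 iu) (integrableZl_EFin 2 iv))).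
  by apply: measurable_funX; exact: measurable_funD.
by move=> x /=; rewrite ger0_norm ?sqr_ge0 //; have := sqr_ge0 (u x - v x); nra.
Qed.

Lemma square_integrableZ (c : R) (u : T -> R) : square_integrable u ->
  square_integrable (fun x => c * u x).
Proof.
move=> [mf iu]; split; first exact: measurable_funM.
apply: eq_integrable (integrableZl_EFin (c ^+ 2) iu) => // x _.
by rewrite /= exprMn.
Qed.

Lemma square_integrable_sum (I : Type) (s : seq I) (u : I -> T -> R) :
  (forall i, square_integrable (u i)) ->
  square_integrable (fun x => \sum_(i <- s) u i x).
Proof.
move=> su; elim: s => [|i s IH].
  by under eq_fun do rewrite big_nil; exact: square_integrable_cst.
by under eq_fun do rewrite big_cons; exact: square_integrableD.
Qed.
End SquareIntegrable.

Section Expectation.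
Context (R : realType) (d : measure_display) (T : measurableType d)
  (P : probability T R).

Lemma Expect_ge0 (u : T -> R) : (forall x, 0 <= u x) -> 0 <= Expect P u.
Proof. by move=> u_ge0; apply: Rintegral_ge0 => x _. Qed.

Lemma ExpectZl (c : R) (u : T -> R) : P.-integrable setT (EFin \o u) ->
  Expect P (fun x => c * u x) = c * Expect P u.
Proof. exact: RintegralZl. Qed.

Lemma Expect_sum (I : Type) (s : seq I) (u : I -> T -> R) :
  (forall i, P.-integrable setT (EFin \o u i)) ->
  Expect P (fun x => \sum_(i <- s) u i x) = \sum_(i <- s) Expect P (u i).
Proof.
move=> iu; elim: s => [|i s IH].
  rewrite big_nil /Expect; under eq_Rintegral do rewrite big_nil.
  by rewrite Rintegral_cst // mul0r.
rewrite big_cons -IH /Expect; under eq_Rintegral do rewrite big_cons.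
by apply: RintegralD => //; exact: integrable_sum_EFin.
Qed.

Lemma Expect_lincomb (I : Type) (s : seq I) (c : I -> R) (u : I -> T -> R) :
  (forall i, P.-integrable setT (EFin \o u i)) ->
  Expect P (fun x => \sum_(i <- s) c i * u i x) = \sum_(i <- s) c i * Expect P (u i).
Proof.
move=> iu; rewrite Expect_sum => [|i]; last exact: integrableZl_EFin.
by apply: eq_bigr => i _; rewrite ExpectZl.
Qed.

Definition covmx (s : nat) (u : 'I_s -> T -> R) : 'M[R]_s :=
  \matrix_(l, m)
    Expect P (fun x => (u l x - Expect P (u l)) * (u m x - Expect P (u m))).

Lemma covmx_sym (s : nat) (u : 'I_s -> T -> R) : (covmx u)^T = covmx u.
Proof.
apply/matrixP => l m; rewrite !mxE; congr (Expect P _).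
by apply/funext => x; rewrite mulrC.
Qed.

Lemma Var_lincomb (s : nat) (u : 'I_s -> T -> R) (y : 'rV[R]_s) :
  (forall l, square_integrable P (u l)) ->
  Var P (fun x => \sum_(l < s) y 0 l * u l x) = qform (covmx u) y y.
Proof.
move=> su; pose c l x := u l x - Expect P (u l).
have sc l : square_integrable P (c l).
  exact: (square_integrableD (su l) (square_integrable_cst P (- Expect P (u l)))).
have sq x : (\sum_(l < s) y 0 l * u l x - \sum_(l < s) y 0 l * Expect P (u l)) ^+ 2 =
    \sum_(p : 'I_s * 'I_s) y 0 p.1 * y 0 p.2 * (c p.1 x * c p.2 x).
  rewrite -sumrB expr2 mulr_suml; under eq_bigr do rewrite mulr_sumr.
  by rewrite pair_bigA; apply: eq_bigr => -[l m] _ /=; rewrite /c; ring.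
rewrite /Var Expect_lincomb; last by move=> l; exact: square_integrable_integrable.
under eq_fun do rewrite sq.
rewrite Expect_lincomb; last by move=> p; exact: square_integrable_mul.
rewrite qformE; under [RHS]eq_bigr do rewrite mxE mulr_sumr.
rewrite [RHS]pair_bigA; apply: eq_bigr => -[l m] _ /=.
by rewrite /covmx !mxE [RHS]mulrA [RHS]mulrAC.
Qed.

Lemma sqrt_qform_Expect_le (s : nat) (G : 'M[R]_s) (v : 'I_s -> T -> R) :
  G^T = G -> (forall y, 0 <= qform G y y) ->
  (forall l, P.-integrable setT (EFin \o v l)) ->
  P.-integrable setT
    (EFin \o (fun x => Num.sqrt (qform G (\row_l v l x) (\row_l v l x)))) ->
  Num.sqrt (qform G (\row_l Expect P (v l)) (\row_l Expect P (v l))) <=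
  Expect P (fun x => Num.sqrt (qform G (\row_l v l x) (\row_l v l x))).
Proof.
move=> G_sym G_psd iv iN; set b := \row_l Expect P (v l).
set N := fun x => Num.sqrt _; set nb := Num.sqrt (qform G b b).
have qE x : qform G (\row_l v l x) b = \sum_(l < s) (G *m b^T) l 0 * v l x.
  by rewrite qformE; apply: eq_bigr => l _; rewrite mxE mulrC.
have iq : P.-integrable setT (EFin \o (fun x => qform G (\row_l v l x) b)).
  apply: eq_integrable (integrable_sum_EFin (index_enum 'I_s)
    (fun l => integrableZl_EFin ((G *m b^T) l 0) (iv l))) => // x _.
  by rewrite /= qE.
have Eqb : Expect P (fun x => qform G (\row_l v l x) b) = qform G b b.
  under eq_fun do rewrite qE; rewrite Expect_lincomb // qformE.
  by apply: eq_bigr => l _; rewrite mulrC; congr (_ * _); rewrite /b mxE.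
have : nb * nb <= nb * Expect P N.
  rewrite -sqrtrM ?G_psd // sqrtr_sqr ger0_norm ?G_psd // -Eqb -ExpectZl //.
  apply: le_Rintegral => // [|x _]; first exact: integrableZl_EFin.
  by rewrite mulrC qform_cauchy_schwarz.
have [->|nb_gt0] := eqVneq nb 0.
  by rewrite Expect_ge0 // => x; exact: sqrtr_ge0.
by rewrite ler_pM2l // lt_def nb_gt0 sqrtr_ge0.
Qed.
End Expectation.

Section Importance.
Context (R : realType) (d : measure_display) (T : measurableType d)
  (Pj : probability R R) (PC : probability T R).

Lemma I_pdp_le_Expect_I_ice (s : nat) (u : 'I_s -> R -> R) (v : 'I_s -> T -> R)
    (f : R -> T -> R) :
  (forall l, square_integrable Pj (u l)) ->
  (forall l, PC.-integrable setT (EFin \o v l)) ->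
  (forall xj xC, f xj xC = \sum_(l < s) u l xj * v l xC) ->
  PC.-integrable setT (EFin \o I_ice Pj f) ->
  I_pdp Pj PC f <= Expect PC (I_ice Pj f).
Proof.
move=> su iv hf iI; set G := covmx Pj u.
have G_psd y : 0 <= qform G y y.
  by rewrite -Var_lincomb // Expect_ge0 // => x; exact: sqr_ge0.
have I_iceE : I_ice Pj f = fun xC => Num.sqrt (qform G (\row_l v l xC) (\row_l v l xC)).
  apply/funext => xC; rewrite /I_ice -Var_lincomb //; congr (Num.sqrt (Var Pj _)).
  by apply/funext => xj; rewrite hf; apply: eq_bigr => l _; rewrite mxE mulrC.
have -> : I_pdp Pj PC f =
    Num.sqrt (qform G (\row_l Expect PC (v l)) (\row_l Expect PC (v l))).
  rewrite /I_pdp -Var_lincomb //; congr (Num.sqrt (Var Pj _)); apply/funext => xj.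
  under eq_fun do rewrite hf; rewrite Expect_lincomb //.
  by apply: eq_bigr => l _; rewrite mxE mulrC.
rewrite I_iceE in iI *; apply: sqrt_qform_Expect_le => //; exact: covmx_sym.
Qed.
End Importance.

Theorem theorem3 (R : realType) (d : measure_display) (T : measurableType d)
  (Pj : probability R R) (PC : probability T R)
  (k : nat) (g : 'I_k -> R -> R) (h : 'I_k -> T -> R) (f : R -> T -> R)
  (hg : forall i, measurable_fun setT (g i))
  (hh : forall i, measurable_fun setT (h i))
  (hf : forall xj xC, f xj xC = \sum_(i < k) g i xj * h i xC)
  (int_ice_var : forall xC, Pj.-integrable setT (fun xj => ((f xj xC) ^+ 2)%:E))
  (int_pdp_mean : forall xj, PC.-integrable setT (fun xC => (f xj xC)%:E))
  (int_pdp_var : Pj.-integrable setT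
     (fun xj => ((Expect PC (fun xC => f xj xC)) ^+ 2)%:E))
  (int_ice : PC.-integrable setT (fun xC => (I_ice Pj f xC)%:E)) :
  Expect PC (fun xC => I_ice Pj f xC) >= I_pdp Pj PC f.
Proof.
have [n [m [q [p [c f_sections]]]]] := separable_sections_expansion hf.
have f_sqr_int xC : square_integrable Pj (f ^~ xC).
  split; last exact: int_ice_var.
  rewrite (_ : f ^~ xC = fun xj => \sum_(i < k) g i xj * h i xC); last exact/funext.
  by apply: measurable_sum => i; exact: measurable_funM (hg i) (measurable_cst _).
apply: (@I_pdp_le_Expect_I_ice _ _ _ _ _ _
  (fun l xj => \sum_(j < m) f xj (p j) * c j l) (fun l => f (q l))) => // l.
- apply: square_integrable_sum => j.
  by under eq_fun do rewrite mulrC; exact: square_integrableZ.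
- exact: int_pdp_mean.
Qed.
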